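(* Let $p$ be a design on a set $\Omega\subseteq\{0,1\}^n$ of treatment vectors, with $p(\mathbf z)=P(\mathbf Z=\mathbf z)$. Each unit $i$ has exposure levels $\mathcal E_i=\{0,\dots,K_i-1\}$ and exposure $e_i=f(\mathbf z_{N_i})$, and potential outcomes $Y_i(z,e)$, $(z,e)\in\{0,1\}\times\mathcal E_i$. Fix $(z_1,e_1)\ne(z_0,e_0)$ in $\{0,1\}\times\mathcal E_i$ for all $i$, and let $\theta=\frac1n\sum_i\big(Y_i(z_1,e_1)-Y_i(z_0,e_0)\big)$. For each unit $i$ and $(z,e)$ let $\Omega_i(z,e)=\{\mathbf z\in\Omega:z_i=z,\ f(\mathbf z_{N_i})=e\}$ and $\pi_i(z,e)=\sum_{\mathbf z\in\Omega_i(z,e)}p(\mathbf z)$. Let weight functions $w_i:\Omega\to\mathbb R$ be given and $\hat\theta=\sum_iw_i(\mathbf Z)Y_i^{obs}$. Then $\mathbb E[\hat\theta]=\theta$ holds for every choice of the real numbers $\{Y_i(z,e)\}$ if and only if $0<\pi_i(z_1,e_1)<1$ and $0<\pi_i(z_0,e_0)<1$ for all $i$, and the weights satisfy, for all $i=1,\dots,n$, $$\sum_{\mathbf z\in\Omega_i(z_1,e_1)}w_i(\mathbf z)p(\mathbf z)=\frac1n,\qquad \sum_{\mathbf z\in\Omega_i(z_0,e_0)}w_i(\mathbf z)p(\mathbf z)=-\frac1n,$$ $$\sum_{\mathbf z\in\Omega_i(z,e)}w_i(\mathbf z)p(\mathbf z)=0\quad\text{for all }(z,e)\notin\{(z_0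,e_0),(z_1,e_1)\}.$$
   Context: Units $1,\dots,n$ each have an interference neighborhood $N_i\subseteq\{1,\dots,n\}\setminus\{i\}$ (e.g. induced by an interference graph) and an exposure function $f$ mapping $\{0,1\}^{N_i}$ onto $\mathcal E_i$. The observed outcome is $Y_i^{obs}=Y_i(Z_i,f(\mathbf Z_{N_i}))$. ''No structural assumptions'' means unbiasedness must hold for every table of potential outcomes. *)

From mathcomp Require Import all_boot all_order all_algebra.
Set Implicit Arguments. Unset Strict Implicit. Unset Printing Implicit Defensive.
Import Order.TTheory GRing.Theory Num.Theory.
Local Open Scope ring_scope.

Notation tvec n := {ffun 'I_n -> bool}.

Section Defs.
Variables (R : realFieldType) (n : nat).

Definition is_design (Omega : {set tvec n}) (p : tvec n -> R) : Prop :=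
  (forall z, z \in Omega -> 0 <= p z) /\ \sum_(z in Omega) p z = 1.

Definition is_neighborhood (N : 'I_n -> {set 'I_n}) : Prop :=
  forall i, i \notin N i.

(* Exposure map: f i z = f(z_{N_i}); it depends only on the coordinates of z
   in N_i, takes values in E_i = {0,...,K_i - 1} and is onto E_i. *)
Definition is_exposure (N : 'I_n -> {set 'I_n}) (K : 'I_n -> nat)
    (f : 'I_n -> tvec n -> nat) : Prop :=
  [/\ forall i (z z' : tvec n), (forall j, j \in N i -> z j = z' j) -> f i z = f i z',
      forall i (z : tvec n), (f i z < K i)%N
    & forall i e, (e < K i)%N -> exists z, f i z = e].

Definition Omega_i (Omega : {set tvec n}) (f : 'I_n -> tvec n -> nat)
    (i : 'I_n) (z : bool) (e : nat) : {set tvec n} :=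
  [set x in Omega | (x i == z) && (f i x == e)].

Definition pi_i (Omega : {set tvec n}) (p : tvec n -> R)
    (f : 'I_n -> tvec n -> nat) (i : 'I_n) (z : bool) (e : nat) : R :=
  \sum_(x in Omega_i Omega f i z e) p x.

Definition Yobs (Y : 'I_n -> bool -> nat -> R) (f : 'I_n -> tvec n -> nat)
    (i : 'I_n) (x : tvec n) : R :=
  Y i (x i) (f i x).

Definition theta_hat (w : 'I_n -> tvec n -> R) (Y : 'I_n -> bool -> nat -> R)
    (f : 'I_n -> tvec n -> nat) (x : tvec n) : R :=
  \sum_i w i x * Yobs Y f i x.

Definition expect (Omega : {set tvec n}) (p : tvec n -> R) (g : tvec n -> R) : R :=
  \sum_(x in Omega) p x * g x.

Definition theta (Y : 'I_n -> bool -> nat -> R) (z1 : bool) (e1 : nat)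
    (z0 : bool) (e0 : nat) : R :=
  n%:R^-1 * \sum_i (Y i z1 e1 - Y i z0 e0).

End Defs.

From mathcomp Require Import all_boot all_order all_algebra ring.
Set Implicit Arguments. Unset Strict Implicit. Unset Printing Implicit Defensive.
Import Order.TTheory GRing.Theory Num.Theory.
Local Open Scope ring_scope.

(* Since every treatment vector lies in exactly one class Omega_i(z,e), both
   E[theta_hat] and theta are linear forms in the table Y, with coefficient of
   Y_i(z,e) the weighted mass of Omega_i(z,e) and the contrast
   ([(z,e) = (z1,e1)] - [(z,e) = (z0,e0)]) / n respectively.  Unbiasedness for
   every table means equality of these coefficients, which are the weight
   conditions.  They force the masses of Omega_i(z1,e1) and Omega_i(z0,e0) to
   be nonzero, so both probabilities are positive, and since the two classes
   are disjoint, each is smaller than one. *)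

Section Delta.
Variable R : pzSemiRingType.

Lemma sum_delta (G : bool -> nat -> R) (b : bool) (m k : nat) : (m < k)%N ->
  \sum_(z : bool) \sum_(e < k) ((z, val e) == (b, m))%:R * G z e = G b m.
Proof.
move=> lt_mk; rewrite (bigD1 b) //= [X in _ + X]big1 ?addr0 => [|z /negbTE zb].
  rewrite (bigD1 (Ordinal lt_mk)) //= eqxx mul1r big1 ?addr0 // => e.
  by rewrite xpair_eqE eqxx -val_eqE /= => /negbTE ->; rewrite mul0r.
by apply: big1 => e _; rewrite xpair_eqE zb mul0r.
Qed.

Lemma sum3_delta (I : finType) (K : I -> nat) (G : I -> bool -> nat -> R)
    (i : I) (b : bool) (m : nat) : (m < K i)%N ->
  \sum_j \sum_(z : bool) \sum_(e < K j) ((j, z, val e) == (i, b, m))%:R * G j z e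
  = G i b m.
Proof.
move=> lt_mK; rewrite (bigD1 i) //= [X in _ + X]big1 ?addr0 => [|j /negbTE ji].
  rewrite -[RHS](sum_delta (G i) b lt_mK).
  by apply: eq_bigr => z _; apply: eq_bigr => e _; rewrite !xpair_eqE eqxx.
by apply: big1 => z _; apply: big1 => e _; rewrite !xpair_eqE ji mul0r.
Qed.

Lemma linear_form_coefP (I : finType) (K : I -> nat) (a b : I -> bool -> nat -> R) :
  (forall Y : I -> bool -> nat -> R,
     \sum_i \sum_(z : bool) \sum_(e < K i) Y i z e * a i z e
     = \sum_i \sum_(z : bool) \sum_(e < K i) Y i z e * b i z e)
  <-> (forall i z e, (e < K i)%N -> a i z e = b i z e).
Proof.
split=> [eq_form i z e lt_eK | eq_ab Y].
  have := eq_form (fun j z' e' => ((j, z', e') == (i, z, e))%:R).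
  by rewrite !(sum3_delta (fun j z' e' => a j z' e')) ?(sum3_delta b).
by apply: eq_bigr => i _; apply: eq_bigr => z _; apply: eq_bigr => e _;
  rewrite eq_ab.
Qed.

End Delta.

Section Unbiasedness.
Variables (R : realFieldType) (n : nat) (Omega : {set tvec n}) (p : tvec n -> R).
Variables (K : 'I_n -> nat) (f : 'I_n -> tvec n -> nat) (w : 'I_n -> tvec n -> R).
Variables (z1 : bool) (e1 : nat) (z0 : bool) (e0 : nat).

Hypothesis f_lt_K : forall i x, (f i x < K i)%N.
Hypothesis e1_lt_K : forall i, (e1 < K i)%N.
Hypothesis e0_lt_K : forall i, (e0 < K i)%N.
Hypothesis p_ge0 : forall x, x \in Omega -> 0 <= p x.
Hypothesis p_sum1 : \sum_(x in Omega) p x = 1.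
Hypothesis ze1_neq_ze0 : (z1, e1) != (z0, e0).

Definition weight_mass i z e : R := \sum_(x in Omega_i Omega f i z e) w i x * p x.

Definition contrast z e : R :=
  n%:R^-1 * (((z, e) == (z1, e1))%:R - ((z, e) == (z0, e0))%:R).

Lemma big_Omega_i (F : tvec n -> R) i z e :
  \sum_(x in Omega_i Omega f i z e) F x
  = \sum_(x in Omega) ((z, e) == (x i, f i x))%:R * F x.
Proof.
rewrite big_mkcond [RHS]big_mkcond; apply: eq_bigr => x _.
rewrite inE xpair_eqE [z == _]eq_sym [e == _]eq_sym.
by case: (x \in Omega) => //=; case: ifP; rewrite ?mul1r ?mul0r.
Qed.

Lemma expect_theta_hat Y :
  expect Omega p (theta_hat w Y f)
  = \sum_i \sum_(z : bool) \sum_(e < K i) Y i z e * weight_mass i z e.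
Proof.
transitivity (\sum_(x in Omega) \sum_i \sum_(z : bool) \sum_(e < K i)
    Y i z e * (((z, val e) == (x i, f i x))%:R * (w i x * p x))).
  apply: eq_bigr => x _; rewrite /theta_hat mulr_sumr; apply: eq_bigr => i _.
  rewrite /Yobs -(sum_delta (Y i) (x i) (f_lt_K i x)) !mulr_sumr.
  by apply: eq_bigr => z _; rewrite !mulr_sumr; apply: eq_bigr => e _; ring.
rewrite exchange_big; apply: eq_bigr => i _; rewrite exchange_big.
apply: eq_bigr => z _; rewrite exchange_big; apply: eq_bigr => e _.
by rewrite /weight_mass big_Omega_i mulr_sumr.
Qed.

Lemma theta_contrast Y :
  theta Y z1 e1 z0 e0 = \sum_i \sum_(z : bool) \sum_(e < K i) Y i z e * contrast z e.
Proof.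
rewrite /theta mulr_sumr; apply: eq_bigr => i _.
rewrite mulrBr -(sum_delta (fun z e => n%:R^-1 * Y i z e) z1 (e1_lt_K i)).
rewrite -(sum_delta (fun z e => n%:R^-1 * Y i z e) z0 (e0_lt_K i)) -sumrB.
by apply: eq_bigr => z _; rewrite -sumrB; apply: eq_bigr => e _; rewrite /contrast; ring.
Qed.

Lemma unbiasedP :
  (forall Y : 'I_n -> bool -> nat -> R,
     expect Omega p (theta_hat w Y f) = theta Y z1 e1 z0 e0)
  <-> (forall i z e, (e < K i)%N -> weight_mass i z e = contrast z e).
Proof.
rewrite -(linear_form_coefP K weight_mass (fun _ => contrast)).
by split=> unbiased Y; have := unbiased Y; rewrite expect_theta_hat theta_contrast.
Qed.

Lemma weight_mass_contrastP i :
  (forall z e, (e < K i)%N -> weight_mass i z e = contrast z e)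
  <-> [/\ weight_mass i z1 e1 = n%:R^-1, weight_mass i z0 e0 = - n%:R^-1
        & forall z e, (e < K i)%N -> (z, e) != (z0, e0) -> (z, e) != (z1, e1) ->
            weight_mass i z e = 0].
Proof.
have ze0_neq_ze1 : (z0, e0) != (z1, e1) by rewrite eq_sym.
split=> [mass_eq | [mass1 mass0 mass_other] z e lt_eK].
  split; [rewrite mass_eq // /contrast eqxx (negbTE ze1_neq_ze0) subr0 mulr1 //
         |rewrite mass_eq // /contrast eqxx (negbTE ze0_neq_ze1) sub0r mulrN1 //
         |move=> z e lt_eK /negbTE ne0 /negbTE ne1].
  by rewrite mass_eq // /contrast ne0 ne1 subrr mulr0.
rewrite /contrast; have [[-> ->] | ne1] := eqVneq (z, e) (z1, e1).
  by rewrite mass1 (negbTE ze1_neq_ze0) subr0 mulr1.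
have [[-> ->] | ne0] := eqVneq (z, e) (z0, e0).
  by rewrite mass0 sub0r mulrN1.
by rewrite mass_other // subrr mulr0.
Qed.

Lemma pi_i_gt0 i z e : weight_mass i z e != 0 -> 0 < pi_i Omega p f i z e.
Proof.
have p_ge0_i x : x \in Omega_i Omega f i z e -> 0 <= p x.
  by rewrite inE => /andP[/p_ge0].
apply: contraNT; rewrite lt_def sumr_ge0 // andbT negbK => /eqP/(psumr_eq0P p_ge0_i).
by move=> p0; apply/eqP/big1 => x /p0 ->; rewrite mulr0.
Qed.

Lemma pi_i_add_le1 i : pi_i Omega p f i z1 e1 + pi_i Omega p f i z0 e0 <= 1.
Proof.
rewrite /pi_i !big_Omega_i -big_split -[X in _ <= X]p_sum1 /=; apply: ler_sum => x x_in.
rewrite -mulrDl ler_piMl ?p_ge0 //.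
have [<- | ne1] := eqVneq (z1, e1) (x i, f i x).
  by rewrite eq_sym (negbTE ze1_neq_ze0) addr0.
by rewrite add0r lern1 leq_b1.
Qed.

Lemma pi_i_bounds i :
  weight_mass i z1 e1 != 0 -> weight_mass i z0 e0 != 0 ->
  0 < pi_i Omega p f i z1 e1 < 1 /\ 0 < pi_i Omega p f i z0 e0 < 1.
Proof.
move=> /pi_i_gt0 pi1_gt0 /pi_i_gt0 pi0_gt0; have pi_add_le1 := pi_i_add_le1 i.
by rewrite pi1_gt0 pi0_gt0 !(lt_le_trans _ pi_add_le1) ?ltrDl ?ltrDr.
Qed.

End Unbiasedness.

Theorem theorem3 (R : realFieldType) (n : nat)
    (Omega : {set tvec n}) (p : tvec n -> R)
    (N : 'I_n -> {set 'I_n}) (K : 'I_n -> nat) (f : 'I_n -> tvec n -> nat)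
    (z1 z0 : bool) (e1 e0 : nat) (w : 'I_n -> tvec n -> R) :
  is_design Omega p ->
  is_neighborhood N ->
  is_exposure N K f ->
  (forall i, (e1 < K i)%N) -> (forall i, (e0 < K i)%N) ->
  (z1, e1) != (z0, e0) ->
  ((forall Y : 'I_n -> bool -> nat -> R,
      expect Omega p (theta_hat w Y f) = theta Y z1 e1 z0 e0)
   <->
   ((forall i, 0 < pi_i Omega p f i z1 e1 < 1 /\ 0 < pi_i Omega p f i z0 e0 < 1)
    /\ (forall i : 'I_n,
         [/\ \sum_(x in Omega_i Omega f i z1 e1) w i x * p x = n%:R^-1,
             \sum_(x in Omega_i Omega f i z0 e0) w i x * p x = - n%:R^-1
           & forall (z : bool) (e : nat), (e < K i)%N ->
               (z, e) != (z0, e0) -> (z, e) != (z1, e1) ->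
               \sum_(x in Omega_i Omega f i z e) w i x * p x = 0]))).
Proof.
move=> [p_ge0 p_sum1] _ [_ f_lt_K _] e1_lt_K e0_lt_K ze1_neq_ze0.
apply: iff_trans (unbiasedP Omega p w z1 z0 f_lt_K e1_lt_K e0_lt_K) _.
have contrastP := weight_mass_contrastP Omega p f w e1_lt_K e0_lt_K ze1_neq_ze0.
split=> [mass_eq | [_ conditions] i]; last exact/(contrastP i)/conditions.
have conditions i := (contrastP i).1 (mass_eq i).
split=> // i; have [mass1 mass0 _] := conditions i.
have inv_n_neq0 : n%:R^-1 != 0 :> R.
  by rewrite invr_eq0 pnatr_eq0 -lt0n (leq_ltn_trans _ (ltn_ord i)).
by apply: (pi_i_bounds (w := w) p_ge0 p_sum1 ze1_neq_ze0); rewrite ?mass1 ?mass0 ?oppr_eq0.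
Qed.
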